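(* Let $C'=(C'(1),\ldots,C'(c'))$ be a sequence of distinct positive integers and let $S$ be a set of $c$ positive integers, $c\in\{c',c'+1\}$, such that if $s_1<\cdots<s_c$ are the elements of $S$ and $t_1<\cdots<t_{c'}$ are the entries of $C'$ in increasing order, then $s_r\le t_r$ for all $r\le c'$. Then the two-column configuration $(\widehat C,C')$ is HHL.
   Context: A column is a finite sequence of entries listed top to bottom (entry in row $r$ is its $r$-th term). The column $\widehat C=(\widehat C(1),\ldots,\widehat C(c))$ is built from $S$ and $C'$ as follows: every $x\in S\cap C'$ is placed in the row where $x$ occurs in $C'$; if $c=c'+1$, the largest element of $S\setminus C'$ is placed in row $c$; the remaining elements of $S\setminus C'$ (there are exactly $|C'\setminus S|$ of them), taken in decreasing order, are placed in the rows occupied in $C'$ by the elements of $C'\setminus S$ taken in decreasing order (the $k$-th largest next to the $k$-th largest). A two-column configuration $(C,C')$ with left column $C$ of length $c$ and right column $C'$ of length $c'$, $c\in\{c',c'+1\}$, is HHL if the entries of $C$ are distinct, the entries of $C'$ are distinct, $C(j)\ne C'(r)$ whenever $r<j$, and $C(r)\le C'(r)$ for all $r\le c'$. *)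

(* Columns are sequences of naturals; row r (1-based in the
   paper) is entry r-1 (0-based nth) of the sequence. *)
From mathcomp Require Import all_boot.
Set Implicit Arguments. Unset Strict Implicit. Unset Printing Implicit Defensive.

Definition SminusC (S C' : seq nat) : seq nat :=
  sort geq [seq x <- S | x \notin C'].
Definition CminusS (S C' : seq nat) : seq nat :=
  sort geq [seq x <- C' | x \notin S].
Definition remS (S C' : seq nat) : seq nat :=
  if size S == (size C').+1 then behead (SminusC S C') else SminusC S C'.

Definition chat (S C' : seq nat) : seq nat :=
  mkseq (fun i =>
    if i < size C' then
      let x := nth 0 C' i in
      if x \in S then x else nth 0 (remS S C') (index x (CminusS S C'))
    else head 0 (SminusC S C')) (size S).

Definition HHL (C C' : seq nat) : Prop :=
  [/\ size C = size C' \/ size C = (size C').+1,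
      uniq C, uniq C',
      (forall r j, r < j -> j < size C -> r < size C' ->
          nth 0 C j != nth 0 C' r)
    & (forall r, r < size C' -> nth 0 C r <= nth 0 C' r)].

From mathcomp Require Import all_boot zify.
Set Implicit Arguments. Unset Strict Implicit. Unset Printing Implicit Defensive.

(* Every entry of the new column determines its row: entries of C' lying in S
   keep their row, the other entries are not in C', and the k-th largest of the
   moved elements sits in the row of the k-th largest element of C' \ S.  This
   gives distinctness and the condition for r < j.  For the inequality, the
   dominance s_r <= t_r of the sorted columns is equivalent to
   #{y in C' | y <= x} <= #{y in S | y <= x} for every x; this survives removing
   the common elements of S and C', and for decreasing sequences it turns back
   into entrywise dominance, shifted past the largest element of S \ C' when
   c = c' + 1. *)

Lemma nth_sorted_count (T : Type) (e : rel T) (p : pred T) x0 s i :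
  transitive e -> sorted e s -> (forall a b, e a b -> p b -> p a) ->
  i < size s -> p (nth x0 s i) = (i < count p s).
Proof.
move=> e_trans + p_closed; elim: s i => [|a s IHs] i //= a_s.
have s_sorted : sorted e s := path_sorted a_s.
have [pa | npa] := boolP (p a).
  case: i => [|i] /= i_s; first by rewrite add1n.
  by rewrite add1n ltnS (IHs i s_sorted i_s).
have count_s0 : count p s = 0.
  apply/eqP; rewrite -leqn0 leqNgt -has_count -all_predC.
  by apply: sub_all (order_path_min e_trans a_s) => b /p_closed /contra; apply.
case: i => [|i] /= i_s; first by rewrite (negbTE npa) count_s0.
by rewrite (IHs i s_sorted i_s) count_s0.
Qed.

Lemma geq_trans : transitive geq.
Proof. exact: rev_trans leq_trans. Qed.

Lemma sorted_leq_nth_le (s : seq nat) x i : sorted leq s -> i < size s ->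
  (nth 0 s i <= x) = (i < count (leq^~ x) s).
Proof.
by move=> s_sorted; apply: nth_sorted_count s_sorted _ => // a b; apply: leq_trans.
Qed.

Lemma sorted_geq_nth_le (s : seq nat) x i : sorted geq s -> i < size s ->
  (nth 0 s i <= x) = (size s - count (leq^~ x) s <= i).
Proof.
move=> s_sorted i_s.
have gt_x_closed (a b : nat) : geq a b -> predC (leq^~ x) b -> predC (leq^~ x) a.
  by move=> ba; rewrite /= -!ltnNge => /leq_trans; apply.
have gt_x_count := nth_sorted_count 0 geq_trans s_sorted gt_x_closed i_s.
by rewrite -(count_predC (leq^~ x) s) addKn (leqNgt (count _ s)) -gt_x_count negbK.
Qed.

Lemma count_le_of_sort_le (s t : seq nat) : size t <= size s ->
  (forall r, r < size t -> nth 0 (sort leq s) r <= nth 0 (sort leq t) r) ->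
  forall x, count (leq^~ x) t <= count (leq^~ x) s.
Proof.
move=> le_ts le_st x; rewrite -(count_sort leq _ t) -(count_sort leq _ s).
case count_t: (count _ (sort leq t)) => [//|k].
have k_t : k < size t by rewrite -(size_sort leq) -count_t count_size.
have k_s : k < size (sort leq s) by rewrite size_sort (leq_trans k_t).
have t_k_le : nth 0 (sort leq t) k <= x.
  by rewrite sorted_leq_nth_le ?sort_sorted ?count_t ?size_sort //; exact: leq_total.
rewrite -sorted_leq_nth_le ?sort_sorted //; last exact: leq_total.
exact: leq_trans (le_st k k_t) t_k_le.
Qed.

Lemma sorted_geq_nth_le_of_count_le (a b : seq nat) :
  sorted geq a -> sorted geq b -> size b <= size a ->
  (forall x, count (leq^~ x) b <= count (leq^~ x) a) ->
  forall k, k < size b -> nth 0 a (size a - size b + k) <= nth 0 b k.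
Proof.
move=> a_sorted b_sorted le_ba le_count k k_b.
have b_k : size b - count (leq^~ (nth 0 b k)) b <= k by rewrite -sorted_geq_nth_le.
have := le_count (nth 0 b k); have := count_size (leq^~ (nth 0 b k)) b.
by rewrite sorted_geq_nth_le //; lia.
Qed.

Lemma perm_filter_mem (T : eqType) (s t : seq T) : uniq s -> uniq t ->
  perm_eq [seq x <- s | x \in t] [seq x <- t | x \in s].
Proof.
move=> s_uniq t_uniq; apply: uniq_perm; rewrite ?filter_uniq // => x.
by rewrite !mem_filter andbC.
Qed.

Lemma count_filter_notin (T : eqType) (p : pred T) (s t : seq T) :
  uniq s -> uniq t ->
  count p [seq x <- s | x \notin t] + count p t =
  count p [seq x <- t | x \notin s] + count p s.
Proof.
move=> s_uniq t_uniq.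
have count_split (u v : seq T) :
    count p u = count p [seq x <- u | x \in v] + count p [seq x <- u | x \notin v].
  by rewrite -count_cat; apply/esym/permP; rewrite perm_filterC.
rewrite [count p s](count_split s t) [count p t](count_split t s).
by rewrite (permP (perm_filter_mem s_uniq t_uniq)); lia.
Qed.

Section TwoColumns.

Variables S C' : seq nat.
Hypotheses (S_uniq : uniq S) (C'_uniq : uniq C').
Hypotheses (size_C'_S : size C' <= size S) (size_S_C' : size S <= (size C').+1).
Hypothesis sort_S_le :
  forall r, r < size C' -> nth 0 (sort leq S) r <= nth 0 (sort leq C') r.

Local Notation A := (SminusC S C').
Local Notation B := (CminusS S C').
Local Notation R := (remS S C').
Local Notation Chat := (chat S C').

Lemma mem_SminusC y : (y \in A) = (y \in S) && (y \notin C').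
Proof. by rewrite mem_sort mem_filter andbC. Qed.

Lemma mem_CminusS y : (y \in B) = (y \in C') && (y \notin S).
Proof. by rewrite mem_sort mem_filter andbC. Qed.

Lemma uniq_SminusC : uniq A.
Proof. by rewrite sort_uniq filter_uniq. Qed.

Lemma sorted_SminusC : sorted geq A.
Proof. by apply: sort_sorted => m n; apply: leq_total. Qed.

Lemma sorted_CminusS : sorted geq B.
Proof. by apply: sort_sorted => m n; apply: leq_total. Qed.

Lemma size_SminusC : size A = size S - size C' + size B.
Proof.
have := count_filter_notin predT S_uniq C'_uniq.
rewrite !count_predT /SminusC /CminusS !size_sort => eq_sizes.
by rewrite -[LHS](addnK (size C')) eq_sizes -addnBA // addnC.
Qed.

Lemma count_CminusS_le x : count (leq^~ x) B <= count (leq^~ x) A.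
Proof.
have eq_counts := count_filter_notin (leq^~ x) S_uniq C'_uniq.
rewrite /SminusC /CminusS !count_sort -(leq_add2r (count (leq^~ x) S)) -eq_counts.
by rewrite leq_add2l count_le_of_sort_le.
Qed.

Lemma nth_remS k : nth 0 R k = nth 0 A (size S - size C' + k).
Proof.
rewrite /remS; case: eqP => [-> | size_S_neq]; first by rewrite subSnn nth_behead.
by have -> : size S - size C' = 0 by lia.
Qed.

Lemma size_remS : size R = size B.
Proof.
rewrite /remS; case: eqP => [size_S | size_S_neq].
  by rewrite size_behead size_SminusC size_S subSnn.
by rewrite size_SminusC; lia.
Qed.

Lemma SminusC_cons : size S = (size C').+1 -> A = head 0 A :: R.
Proof.
move=> size_S; have : 0 < size A by rewrite size_SminusC size_S subSnn.
by rewrite /remS size_S eqxx; case: (SminusC S C').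
Qed.

Lemma uniq_remS : uniq R.
Proof.
have := uniq_SminusC; rewrite /remS; case: ifP => // _.
by case: (SminusC S C') => //= y s /andP[].
Qed.

Lemma remS_notin y : y \in R -> y \notin C'.
Proof.
move=> y_R; have : y \in A.
  by move: y_R; rewrite /remS; case: ifP => // _; apply: mem_behead.
by rewrite mem_SminusC => /andP[].
Qed.

Lemma remS_le_CminusS k : k < size B -> nth 0 R k <= nth 0 B k.
Proof.
move=> k_B; rewrite nth_remS.
have le_BA : size B <= size A by rewrite size_SminusC leq_addl.
have := sorted_geq_nth_le_of_count_le sorted_SminusC sorted_CminusS le_BA
  count_CminusS_le k_B.
by rewrite size_SminusC addnK.
Qed.

Variant nth_chat_spec (i : nat) : nat -> Type :=
  | NthChatKept of i < size C' & nth 0 C' i \in S :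
      nth_chat_spec i (nth 0 C' i)
  | NthChatMoved of i < size C' & nth 0 C' i \notin S :
      nth_chat_spec i (nth 0 R (index (nth 0 C' i) B))
  | NthChatLast of i = size C' & size S = (size C').+1 :
      nth_chat_spec i (head 0 A).

Lemma nth_chatP i : i < size S -> nth_chat_spec i (nth 0 Chat i).
Proof.
move=> i_S; rewrite nth_mkseq //; case: ltnP => [i_C' | C'_i] /=.
  by case: ifP => [in_S | /negbT notin_S]; constructor.
by constructor; lia.
Qed.

Lemma size_chat : size Chat = size S.
Proof. exact: size_mkseq. Qed.

Definition chat_row (y : nat) : nat :=
  if y \in C' then index y C'
  else if y \in R then index (nth 0 B (index y R)) C'
  else size C'.

Lemma chat_rowK i : i < size S -> chat_row (nth 0 Chat i) = i.
Proof.
move=> i_S; rewrite /chat_row; case: nth_chatP => //.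
- by move=> i_C' _; rewrite mem_nth // index_uniq.
- move=> i_C' notin_S; set k := index _ B.
  have k_R : k < size R by rewrite size_remS index_mem mem_CminusS mem_nth.
  rewrite (negbTE (remS_notin (mem_nth 0 k_R))) mem_nth // index_uniq ?uniq_remS //.
  by rewrite nth_index ?index_uniq // mem_CminusS mem_nth.
- move=> -> /SminusC_cons A_cons.
  have := uniq_SminusC; have := mem_head (head 0 A) R.
  by rewrite -A_cons mem_SminusC A_cons /= => /andP[_ /negbTE ->] /andP[/negbTE ->].
Qed.

Lemma uniq_chat : uniq Chat.
Proof.
apply/(uniqP 0) => i j; rewrite !inE size_chat => i_S j_S /(congr1 chat_row).
by rewrite !chat_rowK.
Qed.

Lemma nth_chat_neq r j : r < j -> j < size S -> r < size C' ->
  nth 0 Chat j != nth 0 C' r.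
Proof.
move=> lt_rj j_S r_C'; apply/eqP => eq_jr.
have := chat_rowK j_S; rewrite eq_jr /chat_row mem_nth // index_uniq // => eq_rj.
by rewrite eq_rj ltnn in lt_rj.
Qed.

Lemma nth_chat_le r : r < size C' -> nth 0 Chat r <= nth 0 C' r.
Proof.
move=> r_C'; case: (nth_chatP (leq_trans r_C' size_C'_S)) => // [_ notin_S | r_eq].
  have k_B : index (nth 0 C' r) B < size B by rewrite index_mem mem_CminusS mem_nth.
  by have := remS_le_CminusS k_B; rewrite nth_index // mem_CminusS mem_nth.
by rewrite r_eq ltnn in r_C'.
Qed.

End TwoColumns.

Theorem proposition4p1 (C' S : seq nat) :
  uniq C' -> all (fun x => 0 < x) C' ->
  uniq S -> all (fun x => 0 < x) S ->
  (size S = size C' \/ size S = (size C').+1) ->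
  (forall r, r < size C' -> nth 0 (sort leq S) r <= nth 0 (sort leq C') r) ->
  HHL (chat S C') C'.
Proof.
move=> C'_uniq _ S_uniq _ size_S sort_S_le.
have [size_C'_S size_S_C'] : size C' <= size S /\ size S <= (size C').+1 by lia.
split.
- by rewrite size_chat.
- exact: uniq_chat.
- exact: C'_uniq.
- by move=> r j; rewrite size_chat; apply: nth_chat_neq.
- exact: nth_chat_le.
Qed.
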